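(* Let $q$ be a prime power, let $k\ge 5$ and $n=2k\le q$. Let $\alpha_1,\dots,\alpha_n\in\mathbb{F}_q$ be pairwise distinct, let $G_{k-1,k-2}$ be the $k\times n$ matrix whose rows are $(\alpha_1^{e},\dots,\alpha_n^{e})$ for $e=0,1,\dots,k-3,k,k+1$, let $\mathbf{v}=(v_1,\dots,v_n)\in(\mathbb{F}_q^* )^n$, and let $C_{\mathbf v}$ be the linear code generated by $G_{k-1,k-2}\cdot\mathrm{diag}(v_1,\dots,v_n)$. Let $u_i=\prod_{j\ne i}(\alpha_i-\alpha_j)^{-1}$ and $S_t=S_t(\alpha_1,\dots,\alpha_n)$. Then $C_{\mathbf v}$ is self-dual if and only if (1) there exists $\lambda\in\mathbb{F}_q^*$ with $v_i^2=\lambda u_i$ for all $1\le i\le n$, and (2) $S_1=S_2=S_3=0$.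
   Context: Convention: $0^0=1$. $S_t(x_1,\dots,x_m)=\sum_{t_1+\dots+t_m=t,\ t_i\ge0}x_1^{t_1}\cdots x_m^{t_m}$ is the complete homogeneous symmetric polynomial of degree $t$. A linear code $C$ is self-dual if $C=C^\perp$, where $C^\perp$ is the dual with respect to the Euclidean inner product. *)

From HB Require Import structures.
From mathcomp Require Import all_boot all_order all_algebra all_field.
Set Implicit Arguments. Unset Strict Implicit. Unset Printing Implicit Defensive.
Import GRing.Theory.
Local Open Scope ring_scope.

Definition code_of (F : fieldType) (m n : nat) (M : 'M[F]_(m, n)) : pred 'rV[F]_n :=
  fun x => (x <= M)%MS.

Definition eucl_dot (F : fieldType) (n : nat) (x y : 'rV[F]_n) : F :=
  \sum_(i < n) x 0 i * y 0 i.

Definition dual_code (F : finFieldType) (n : nat) (C : pred 'rV[F]_n) : pred 'rV[F]_n :=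
  fun x => [forall y : 'rV[F]_n, (y \in C) ==> (eucl_dot x y == 0)].

Definition self_dual (F : finFieldType) (n : nat) (C : pred 'rV[F]_n) : Prop :=
  C =i dual_code C.

Definition gexp (k : nat) (i : 'I_k) : nat :=
  if (i < k - 2)%N then (i : nat) else (i + 2)%N.

Definition Gmat (F : fieldType) (k n : nat) (alpha : 'I_n -> F) : 'M[F]_(k, n) :=
  \matrix_(i < k, j < n) alpha j ^+ gexp i.

Definition complete_hom (F : fieldType) (n t : nat) (x : 'I_n -> F) : F :=
  \sum_(m : {ffun 'I_n -> 'I_t.+1} | (\sum_(i < n) (m i : nat))%N == t)
     \prod_(i < n) x i ^+ m i.

Definition ucoef (F : fieldType) (n : nat) (alpha : 'I_n -> F) (i : 'I_n) : F :=
  \prod_(j < n | j != i) (alpha i - alpha j)^-1.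

From HB Require Import structures.
From mathcomp Require Import all_boot all_order all_algebra all_field.
From mathcomp Require Import zify ring.
Set Implicit Arguments. Unset Strict Implicit. Unset Printing Implicit Defensive.
Import GRing.Theory.
Local Open Scope ring_scope.

(* The code has dimension k = n/2, so it is self-dual iff its generator M
   satisfies M M^T = 0, i.e. iff the weighted power sums
   W s = \sum_j v_j^2 alpha_j^s vanish at every sum of two row exponents; for
   k >= 5 these sums are exactly 0, ..., n-2 and n, n+1, n+2.  By Lagrange
   interpolation the weights annihilated by 1, alpha, ..., alpha^(n-2) form the
   line spanned by u, which turns the first block of conditions into
   v_i^2 = lambda u_i.  Finally \sum_i u_i alpha_i^(n-1+t) = S_t: the identity
   \sum_i u_i alpha_i^m \prod_j (alpha_i - alpha_j) = 0 shows that the series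
   \sum_t (\sum_i u_i alpha_i^(n-1+t)) X^t is, like \sum_t S_t X^t, an inverse
   of \prod_j (1 - alpha_j X); compare the two modulo X^(t+1). *)

Lemma big_ord_widen_eq0 (R : nmodType) (G : nat -> R) m N :
  (m <= N)%N -> (forall k, (m <= k < N)%N -> G k = 0) ->
  \sum_(k < m) G k = \sum_(k < N) G k.
Proof.
move=> le_mN G0; rewrite (big_ord_widen N G le_mN) big_mkcond /=.
by apply: eq_bigr => k _; case: ifPn => // k_ge; rewrite G0 // ltn_ord andbT leqNgt.
Qed.

Lemma dvdXnP (F : fieldType) N (p : {poly F}) :
  reflect (forall k, (k < N)%N -> p`_k = 0) ('X^N %| p).
Proof.
apply: (iffP (modp_eq0P _ _)); rewrite -Pdiv.IdomainMonic.take_poly_modp.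
  by move=> p0 k k_lt; have := coef_take_poly N p k; rewrite p0 coef0 k_lt.
by move=> p0; apply/polyP => k; rewrite coef_take_poly coef0; case: ifP => // /p0.
Qed.

Section ReciprocalNodal.
Variable F : fieldType.

Definition recip_nodal n (alpha : 'I_n -> F) : {poly F} :=
  \prod_j (1 - (alpha j)%:P * 'X).

Lemma coef_recip_nodalS n (alpha : 'I_n.+1 -> F) k :
  (recip_nodal alpha)`_k = (recip_nodal (alpha \o lift ord0))`_k
                           - alpha ord0 * (recip_nodal (alpha \o lift ord0) * 'X)`_k.
Proof.
by rewrite /recip_nodal big_ord_recl mulrBl mul1r coefB -mulrA coefCM commr_polyX.
Qed.

Lemma coef_recip_nodal_gt n (alpha : 'I_n -> F) k :
  (n < k)%N -> (recip_nodal alpha)`_k = 0.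
Proof.
elim: n alpha k => [|n IHn] alpha k n_lt_k.
  by rewrite /recip_nodal big_ord0 coefC; case: k n_lt_k.
rewrite coef_recip_nodalS coefMX IHn; last lia.
by case: k n_lt_k => // k k_gt /=; rewrite IHn ?mulr0 ?subr0.
Qed.

Lemma recip_nodal_homog n (alpha : 'I_n -> F) (y : F) :
  \sum_(k < n.+1) (recip_nodal alpha)`_k * y ^+ (n - k) = \prod_j (y - alpha j).
Proof.
elim: n alpha => [|n IHn] alpha.
  by rewrite big_ord1 big_ord0 /recip_nodal big_ord0 coefC mulr1.
rewrite [RHS]big_ord_recl -[X in _ * X](IHn (alpha \o lift ord0)).
set q := recip_nodal _; set a := alpha ord0.
under eq_bigr do rewrite coef_recip_nodalS -/q mulrBl.
rewrite sumrB mulrBl mulr_sumr mulr_sumr; congr (_ - _).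
  rewrite big_ord_recr /= coef_recip_nodal_gt // mul0r addr0.
  by apply: eq_bigr => k _; rewrite subSn ?exprS 1?mulrCA // -ltnS.
rewrite big_ord_recl coefMX /= mulr0 mul0r add0r.
by apply: eq_bigr => k _; rewrite coefMX /= subSS mulrA.
Qed.

End ReciprocalNodal.

Section Moments.
Variables (F : fieldType) (n : nat) (alpha : 'I_n -> F).
Hypothesis alpha_inj : injective alpha.

Definition moment (w : 'I_n -> F) (s : nat) : F := \sum_j w j * alpha j ^+ s.

Lemma moment_horner w (p : {poly F}) :
  \sum_j w j * p.[alpha j] = \sum_(s < size p) p`_s * moment w s.
Proof.
under eq_bigr do rewrite horner_coef mulr_sumr.
rewrite exchange_big /=; apply: eq_bigr => s _; rewrite /moment mulr_sumr.
by apply: eq_bigr => j _; rewrite mulrCA.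
Qed.

Lemma poly_nodes_eq0 (p : {poly F}) :
  (size p <= n)%N -> (forall l, p.[alpha l] = 0) -> p = 0.
Proof.
move=> size_p p_nodes; apply: (@roots_geq_poly_eq0 _ p [seq alpha l | l <- enum 'I_n]).
- by apply/allP => _ /mapP[l _ ->]; apply/eqP/p_nodes.
- by rewrite map_inj_uniq ?enum_uniq.
- by rewrite size_map size_enum_ord.
Qed.

Definition lagrange_num (i : 'I_n) : {poly F} :=
  \prod_(j < n | j != i) ('X - (alpha j)%:P).

Lemma lagrange_num_root i l : l != i -> (lagrange_num i).[alpha l] = 0.
Proof. by move=> li; rewrite horner_prod (bigD1 l) //= hornerXsubC subrr mul0r. Qed.

Lemma lagrange_num_ucoef i : (lagrange_num i).[alpha i] * ucoef alpha i = 1.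
Proof.
rewrite horner_prod /ucoef prodfV; under eq_bigr do rewrite hornerXsubC.
apply: divff; apply/prodf_neq0 => j ji.
by rewrite subr_eq0 (inj_eq alpha_inj) eq_sym.
Qed.

Lemma size_lagrange_num i : size (lagrange_num i) = n.
Proof.
rewrite size_prod => [|j _]; last by rewrite polyXsubC_eq0.
under eq_bigr do rewrite size_XsubC.
by rewrite sum_nat_const cardC1 card_ord; case: n i => [[]|m] //= _; lia.
Qed.

Lemma lagrange_num_coef_top i : (lagrange_num i)`_n.-1 = 1.
Proof. by rewrite -(size_lagrange_num i) -lead_coefE lead_coef_prod_XsubC. Qed.

Lemma moment_ucoef s : (s < n)%N -> moment (ucoef alpha) s = (s == n.-1)%:R.
Proof.
move=> s_lt_n.
pose L := \sum_i (alpha i ^+ s * ucoef alpha i) *: lagrange_num i.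
have L_nodes l : L.[alpha l] = alpha l ^+ s.
  rewrite horner_sum (bigD1 l) //= big1 => [|j jl]; last first.
    by rewrite hornerZ lagrange_num_root ?mulr0 // eq_sym.
  by rewrite hornerZ -mulrA [_ * _.[_]]mulrC lagrange_num_ucoef mulr1 addr0.
have size_L : (size L <= n)%N.
  rewrite (leq_trans (size_sum _ _ _)) //; apply/bigmax_leqP => i _.
  by rewrite (leq_trans (size_scale_leq _ _)) ?size_lagrange_num.
have /eqP : L - 'X^s = 0.
  apply: poly_nodes_eq0 => [|l]; last by rewrite hornerD hornerN L_nodes hornerXn subrr.
  by rewrite (leq_trans (size_polyD _ _)) // size_polyN size_polyXn geq_max size_L.
rewrite subr_eq0 => /eqP/(congr1 (fun p : {poly F} => p`_n.-1)).
rewrite coef_sum coefXn eq_sym => <-; apply: eq_bigr => i _.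
by rewrite coefZ lagrange_num_coef_top mulr1 mulrC.
Qed.

Lemma moments_vanishP w :
  (forall s, (s < n.-1)%N -> moment w s = 0) <->
  exists c, forall i, w i = c * ucoef alpha i.
Proof.
split=> [w_moments | [c w_c] s s_lt].
  exists (moment w n.-1) => i.
  have top : (n.-1 < n)%N by rewrite ltn_predL (leq_ltn_trans _ (ltn_ord i)).
  have := moment_horner w (lagrange_num i).
  rewrite (bigD1 i) //= big1 => [|j ji]; last by rewrite lagrange_num_root ?mulr0.
  rewrite addr0 size_lagrange_num (bigD1 (Ordinal top)) //= big1 => [|t]; last first.
    rewrite -val_eqE /= => t_ne; rewrite w_moments ?mulr0 //.
    by have := ltn_ord t; lia.
  rewrite lagrange_num_coef_top mul1r addr0 => <-.
  by rewrite -mulrA lagrange_num_ucoef mulr1.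
have -> : moment w s = c * moment (ucoef alpha) s.
  by rewrite /moment mulr_sumr; apply: eq_bigr => i _; rewrite w_c mulrA.
rewrite moment_ucoef; last lia.
by rewrite (_ : (s == n.-1) = false) ?mulr0 //; apply/negbTE; lia.
Qed.

Lemma recip_nodal_recurrence w m :
  \sum_(k < n.+1) (recip_nodal alpha)`_k * moment w (m + (n - k)) = 0.
Proof.
under eq_bigr do rewrite /moment mulr_sumr.
rewrite exchange_big /= big1 // => j _.
transitivity (w j * alpha j ^+ m *
              \sum_(k < n.+1) (recip_nodal alpha)`_k * alpha j ^+ (n - k)).
  by rewrite mulr_sumr; apply: eq_bigr => k _; rewrite exprD; ring.
by rewrite recip_nodal_homog (bigD1 j) //= subrr mul0r mulr0.
Qed.

Lemma recip_nodal_moment_ucoef s : (0 < n)%N -> (0 < s)%N ->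
  \sum_(k < s.+1) (recip_nodal alpha)`_k * moment (ucoef alpha) (n.-1 + (s - k)) = 0.
Proof.
move=> n_gt0 s_gt0.
pose G k := (recip_nodal alpha)`_k * moment (ucoef alpha) (n.-1 + s - k).
have rec_G :
    \sum_(k < n.+1) (recip_nodal alpha)`_k * moment (ucoef alpha) (s.-1 + (n - k))
    = \sum_(k < (s + n).+1) G k.
  rewrite -(@big_ord_widen_eq0 _ G n.+1); last 2 first.
  - lia.
  - by move=> k /andP[k_gt _]; rewrite /G coef_recip_nodal_gt ?mul0r.
  by apply: eq_bigr => k _; rewrite /G; congr (_ * moment _ _); have := ltn_ord k; lia.
rewrite -[RHS](recip_nodal_recurrence (ucoef alpha) s.-1) rec_G.
rewrite -(@big_ord_widen_eq0 _ G s.+1); last 2 first.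
- lia.
- move=> k /andP[k_gt _]; rewrite /G.
  have [k_le_n | k_gt_n] := leqP k n; last by rewrite coef_recip_nodal_gt ?mul0r.
  rewrite moment_ucoef; last lia.
  by rewrite (_ : (_ == _) = false) ?mulr0 //; apply/negbTE; lia.
by apply: eq_bigr => k _; rewrite /G addnBA // -ltnS.
Qed.

Definition geom_trunc t : {poly F} :=
  \prod_j \sum_(l < t.+1) ((alpha j)%:P * 'X) ^+ l.

Lemma complete_hom_coef t : complete_hom t alpha = (geom_trunc t)`_t.
Proof.
rewrite /geom_trunc bigA_distr_bigA coef_sum /complete_hom big_mkcond /=.
apply: eq_bigr => f _.
have -> : \prod_i ((alpha i)%:P * 'X) ^+ f i
          = (\prod_i alpha i ^+ f i)%:P * 'X^(\sum_i (f i : nat)).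
  rewrite -prodrXr rmorph_prod -big_split /=.
  by apply: eq_bigr => i _; rewrite exprMn rmorphXn.
by rewrite coefCM coefXn eq_sym; case: eqP; rewrite ?mulr1 ?mulr0.
Qed.

Lemma recip_nodal_geom_trunc t : 'X^(t.+1) %| recip_nodal alpha * geom_trunc t - 1.
Proof.
rewrite /recip_nodal /geom_trunc -big_split /=.
apply: (big_ind (fun p => 'X^(t.+1) %| p - 1)) => [|p q p1 q1|j _].
- by rewrite subrr dvdp0.
- have -> : p * q - 1 = p * (q - 1) + (p - 1) by ring.
  by rewrite dvdp_add ?dvdp_mull.
have -> : (1 - (alpha j)%:P * 'X) * \sum_(l < t.+1) ((alpha j)%:P * 'X) ^+ l - 1
          = - (alpha j ^+ t.+1)%:P * 'X^(t.+1).
  by rewrite -[1 - _ * 'X]opprB mulNr -subrX1 exprMn rmorphXn; ring.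
by rewrite dvdp_mull.
Qed.

Lemma moment_ucoef_complete_hom t :
  (0 < n)%N -> moment (ucoef alpha) (n.-1 + t) = complete_hom t alpha.
Proof.
move=> n_gt0.
(* [A] and [geom_trunc t] are both inverses of [recip_nodal alpha] modulo ['X^(t.+1)]. *)
pose A := \poly_(r < t.+1) moment (ucoef alpha) (n.-1 + r).
have RA : 'X^(t.+1) %| recip_nodal alpha * A - 1.
  apply/dvdXnP => s s_le; rewrite coefB coefM coef1.
  case: s s_le => [|s] s_le.
    rewrite big_ord1 coef_poly /= addn0 moment_ucoef ?prednK // eqxx mulr1.
    rewrite -horner_coef0 horner_prod big1 ?subrr // => j _.
    by rewrite hornerD hornerN hornerMX mulr0 subr0 hornerC.
  rewrite subr0 -[RHS](recip_nodal_moment_ucoef n_gt0 (ltn0Sn s)).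
  by apply: eq_bigr => j _; rewrite coef_poly ifT //; have := ltn_ord j; lia.
have AQ : 'X^(t.+1) %| A - geom_trunc t.
  have -> : A - geom_trunc t = geom_trunc t * (recip_nodal alpha * A - 1)
                               - A * (recip_nodal alpha * geom_trunc t - 1) by ring.
  by rewrite dvdp_sub ?dvdp_mull ?recip_nodal_geom_trunc.
move/dvdXnP/(_ t (ltnSn t))/eqP: AQ.
by rewrite coefB subr_eq0 coef_poly ltnSn complete_hom_coef => /eqP.
Qed.

Lemma moments_vanish_iff w : (0 < n)%N -> (forall i, w i != 0) ->
  ((forall s, (s < n.-1)%N -> moment w s = 0) /\
     moment w n = 0 /\ moment w n.+1 = 0 /\ moment w n.+2 = 0) <->
  ((exists2 c, c != 0 & forall i, w i = c * ucoef alpha i) /\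
     complete_hom 1 alpha = 0 /\ complete_hom 2 alpha = 0 /\ complete_hom 3 alpha = 0).
Proof.
move=> n_gt0 w_neq0.
have high c t : (forall i, w i = c * ucoef alpha i) ->
    moment w (n.-1 + t) = c * complete_hom t alpha.
  move=> w_c; rewrite -moment_ucoef_complete_hom // /moment mulr_sumr.
  by apply: eq_bigr => i _; rewrite w_c mulrA.
have [-> -> ->] : [/\ moment w n = moment w (n.-1 + 1),
    moment w n.+1 = moment w (n.-1 + 2) & moment w n.+2 = moment w (n.-1 + 3)].
  by split; congr (moment w _); lia.
split=> [[low [m1 [m2 m3]]] | [[c c_neq0 w_c] [S1 [S2 S3]]]].
  have [c w_c] := (moments_vanishP w).1 low.
  have c_neq0 : c != 0.
    have top : (n.-1 < n)%N by rewrite ltn_predL.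
    by apply: contraNneq (w_neq0 (Ordinal top)) => c0; rewrite w_c c0 mul0r.
  have S0 t : moment w (n.-1 + t) = 0 -> complete_hom t alpha = 0.
    by rewrite (high c) // => /eqP; rewrite mulf_eq0 (negbTE c_neq0) => /eqP.
  by split; [exists c | rewrite !S0].
split; first by apply/(moments_vanishP w); exists c.
by rewrite !(high c) // S1 S2 S3 !mulr0.
Qed.

End Moments.

Lemma gexpP k (i : 'I_k) :
  ((i < k - 2)%N /\ gexp i = i) \/ ((k - 2 <= i)%N /\ gexp i = (i + 2)%N).
Proof. by rewrite /gexp; case: ltnP; [left | right]. Qed.

Lemma gexp_inj k : injective (@gexp k).
Proof.
move=> i j eq_ij; apply: ord_inj.
by case: (gexpP i) eq_ij => -[? ->]; case: (gexpP j) => -[? ->]; lia.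
Qed.

Lemma gexp_lt k (i : 'I_k) : (gexp i < k.+2)%N.
Proof. by have := ltn_ord i; case: (gexpP i) => -[? ->]; lia. Qed.

Lemma gexp_add_range k (a b : 'I_k) :
  (gexp a + gexp b < (2 * k).-1)%N || (2 * k <= gexp a + gexp b <= (2 * k).+2)%N.
Proof.
have := ltn_ord a; have := ltn_ord b.
by case: (gexpP a) => -[? ->]; case: (gexpP b) => -[? ->]; lia.
Qed.

Lemma gexp_add_onto k s : (5 <= k)%N ->
  (s < (2 * k).-1)%N || (2 * k <= s <= (2 * k).+2)%N ->
  exists a b : 'I_k, (gexp a + gexp b)%N = s.
Proof.
move=> k_ge5 s_range.
suff [a [b [a_lt b_lt ab_s]]] : exists a b, [/\ (a < k)%N, (b < k)%N &
    ((if a < k - 2 then a else a + 2) + (if b < k - 2 then b else b + 2))%N = s].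
  by exists (Ordinal a_lt), (Ordinal b_lt).
have : (s <= 2 * k - 6)%N \/ (2 * k - 6 < s <= 2 * k - 3)%N \/ s = (2 * k - 2)%N
       \/ s = (2 * k)%N \/ s = (2 * k).+1 \/ s = (2 * k).+2 by lia.
case=> [s_low | [s_mid | [-> | [-> | [-> | ->]]]]];
  [exists (minn s (k - 3)), (s - minn s (k - 3))%N | exists (k - 2)%N, (s - k)%N
  | exists (k - 1)%N, (k - 3)%N | exists (k - 2)%N, (k - 2)%N
  | exists (k - 2)%N, (k - 1)%N | exists (k - 1)%N, (k - 1)%N];
  by split; try lia; do 2?case: ltnP => ?; lia.
Qed.

Lemma gexp_sums_vanish (R : nmodType) k (W : nat -> R) : (5 <= k)%N ->
  (forall a b : 'I_k, W (gexp a + gexp b)%N = 0) <->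
  ((forall s, (s < (2 * k).-1)%N -> W s = 0) /\
     W (2 * k)%N = 0 /\ W (2 * k).+1 = 0 /\ W (2 * k).+2 = 0).
Proof.
move=> k_ge5; split=> [W0 | [low [W2k [W2k1 W2k2]]] a b].
  have W0_range s : (s < (2 * k).-1)%N || (2 * k <= s <= (2 * k).+2)%N -> W s = 0.
    by move=> /(gexp_add_onto k_ge5)[a [b <-]].
  by split=> [s s_lt|]; [|do !split]; apply: W0_range; lia.
case/orP: (gexp_add_range a b) => [/low // | ab_top].
have : (gexp a + gexp b = 2 * k \/ gexp a + gexp b = (2 * k).+1 \/
        gexp a + gexp b = (2 * k).+2)%N by lia.
by case=> [->|[->|->]].
Qed.

Lemma eucl_dotE (F : fieldType) n (x y : 'rV[F]_n) : eucl_dot x y = (x *m y^T) 0 0.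
Proof. by rewrite /eucl_dot mxE; apply: eq_bigr => j _; rewrite mxE. Qed.

Section SelfDualCodes.
Variables (F : finFieldType) (m n : nat) (M : 'M[F]_(m, n)).

Lemma mem_code_of x : (x \in code_of M) = (x <= M)%MS.
Proof. by rewrite unfold_in. Qed.

Lemma mem_dual_code_of x : (x \in dual_code (code_of M)) = (x *m M^T == 0).
Proof.
rewrite unfold_in /dual_code; apply/forallP/eqP => [x_dual | xM0 y].
  apply/rowP => b; transitivity (eucl_dot x (row b M)).
    by rewrite eucl_dotE !mxE; apply: eq_bigr => j _; rewrite !mxE.
  by rewrite mxE; apply/eqP/(implyP (x_dual _) (row_sub b M)).
apply/implyP; rewrite mem_code_of => /submxP[z ->].
by rewrite eucl_dotE trmx_mul mulmxA xM0 mul0mx mxE.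
Qed.

Lemma self_dual_code_ofP :
  (\rank M).*2 = n -> self_dual (code_of M) <-> M *m M^T = 0.
Proof.
move=> rank_half; split=> [M_sd | MMt0].
  apply/row_matrixP => a; rewrite row_mul row0; apply/eqP.
  by rewrite -mem_dual_code_of -M_sd mem_code_of row_sub.
have M_ker : (M <= kermx M^T)%MS by apply/sub_kermxP.
have ker_M : (kermx M^T <= M)%MS.
  by rewrite -(mxrank_leqif_sup M_ker).2 mxrank_ker mxrank_tr; apply/eqP; lia.
move=> x; rewrite mem_dual_code_of -sub_kermx mem_code_of.
by apply/idP/idP => x_sub; apply: submx_trans x_sub _.
Qed.

End SelfDualCodes.

Section GeneratorMatrix.
Variables (F : fieldType) (k n : nat) (alpha : 'I_n -> F).
Hypothesis alpha_inj : injective alpha.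

Lemma row_free_Gmat : (k.+2 <= n)%N -> row_free (Gmat k alpha).
Proof.
move=> k2_le_n; rewrite -kermx_eq0; apply/eqP/row_matrixP => r; rewrite row0.
set x := row r _; have xG0 : x *m Gmat k alpha = 0 by rewrite -row_mul mulmx_ker row0.
pose p := \sum_(a < k) x 0 a *: 'X^(gexp a).
have p0 : p = 0.
  apply: (poly_nodes_eq0 alpha_inj) => [|l].
    rewrite (leq_trans (size_sum _ _ _)) //; apply/bigmax_leqP => a _.
    by rewrite (leq_trans (size_scale_leq _ _)) // size_polyXn (leq_trans (gexp_lt a)).
  transitivity ((x *m Gmat k alpha) 0 l); last by rewrite xG0 mxE.
  by rewrite horner_sum mxE; apply: eq_bigr => a _; rewrite hornerZ hornerXn /Gmat !mxE.
apply/rowP => a; move/(congr1 (fun q : {poly F} => q`_(gexp a))): p0.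
rewrite coef_sum coef0 (bigD1 a) //= big1 => [|b ba]; last first.
  by rewrite coefZ coefXn (inj_eq (@gexp_inj k)) eq_sym (negbTE ba) mulr0.
by rewrite coefZ coefXn eqxx mulr1 addr0 => ->; rewrite mxE.
Qed.

Variable v : 'I_n -> F.

Local Notation Gv := (Gmat k alpha *m diag_mx (\row_j v j)).

Lemma Gmat_diag_gram_eq0 :
  Gv *m Gv^T = 0 <->
  forall a b : 'I_k, moment alpha (fun j => v j ^+ 2) (gexp a + gexp b) = 0.
Proof.
have gram a b : (Gv *m Gv^T) a b = moment alpha (fun j => v j ^+ 2) (gexp a + gexp b).
  rewrite mul_mx_diag mxE; apply: eq_bigr => j _.
  by rewrite !mxE exprD; ring.
split=> [GG0 a b | moments0]; first by rewrite -gram GG0 mxE.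
by apply/matrixP => a b; rewrite gram moments0 mxE.
Qed.

Hypothesis v_neq0 : forall j, v j != 0.

Lemma rank_Gmat_diag : (k.+2 <= n)%N -> \rank Gv = k.
Proof.
move=> k2_le_n; rewrite mxrankMfree; first exact/eqP/row_free_Gmat.
rewrite row_free_unit unitmxE det_diag unitfE; apply/prodf_neq0 => j _.
by rewrite mxE v_neq0.
Qed.

End GeneratorMatrix.

Theorem corollary3p15 (F : finFieldType) (k n : nat)
  (hk : (5 <= k)%N) (hn : n = (2 * k)%N) (hq : (n <= #|F|)%N)
  (alpha : 'I_n -> F) (halpha : injective alpha)
  (v : 'I_n -> F) (hv : forall i, v i != 0) :
  self_dual (code_of (Gmat k alpha *m diag_mx (\row_j v j)))
  <->
  ((exists2 lambda : F, lambda != 0 &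
      forall i : 'I_n, v i ^+ 2 = lambda * ucoef alpha i)
   /\ complete_hom 1 alpha = 0
   /\ complete_hom 2 alpha = 0
   /\ complete_hom 3 alpha = 0).
Proof.
subst n.
have rank_half : (\rank (Gmat k alpha *m diag_mx (\row_j v j))).*2 = (2 * k)%N.
  by rewrite rank_Gmat_diag //; lia.
apply: iff_trans (self_dual_code_ofP rank_half) _.
apply: iff_trans (Gmat_diag_gram_eq0 _ _ _) _.
apply: iff_trans (gexp_sums_vanish _ hk) _.
apply: moments_vanish_iff => // [|i]; first lia.
by rewrite expf_neq0.
Qed.
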